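(* Assume $abcd\neq0$. For every $\omega$ on the unit circle, \[T(\omega)=\frac{|a|^2}{|a|^2+|b|^2{\zeta'_M}^2},\qquad R(\omega)=\frac{|b|^2{\zeta'_M}^2}{|a|^2+|b|^2{\zeta'_M}^2},\] so in particular $T(\omega)+R(\omega)=1$.
   Context: Setting: $M\ge1$, $C=\begin{bmatrix} a&b\\ c&d\end{bmatrix}$ a $2\times2$ unitary matrix, $\Delta=\det C$; $|L\rangle=(1,0)^\top$, $|R\rangle=(0,1)^\top$; $\Gamma_M=\{0,\dots,M-1\}$. $E_M$ is the linear map on $\ell^2(\Gamma_M;\mathbb{C}^2)$ with $(E_M\varphi)(x)=P\varphi(x+1)+Q\varphi(x-1)$, $\varphi(-1)=\varphi(M)=0$, $P=\begin{bmatrix} a&b\\0&0\end{bmatrix}$, $Q=\begin{bmatrix}0&0\\c&d\end{bmatrix}$. For $\xi\in\mathbb{R}$, $z=e^{-i\xi}$, let $\varphi$ be the unique solution of $(z-E_M)\varphi=\delta_0|R\rangle$, and write $\varphi(x;L)=\langle L|\varphi(x)\rangle$, $\varphi(x;R)=\langle R|\varphi(x)\rangle$. Fix a square root $\Delta^{1/2}$ and set $\omega=\Delta^{-1/2}z$ (on the unit circle). The transmission and reflection rates are $T(\omega)=|d\,\varphi(M-1;R)|^2$ and $R(\omega)=|a\,\varphi(0;L)+b\,\varphi(0;R)|^2$. Put $x(\omega)=\frac{\omega+\omega^{-1}}{2|a|}$ and $\zeta'_m=U_{m-1}(x(\omega))$, $U_m$ the Chebyshev polynomials of the second kind ($U_{-1}=0$,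 $U_0=1$, $U_{m+1}(t)=2tU_m(t)-U_{m-1}(t)$). *)

From HB Require Import structures.
From mathcomp Require Import all_boot all_order all_algebra.
From mathcomp Require Import complex.
Set Implicit Arguments. Unset Strict Implicit. Unset Printing Implicit Defensive.
Import Order.TTheory GRing.Theory Num.Theory.
Local Open Scope ring_scope.

Section Defs.
Variable F : numClosedFieldType.

Definition mx22 (a b c d : F) : 'M[F]_2 :=
  \matrix_(i < 2, j < 2)
    if i == 0 then (if j == 0 then a else b) else (if j == 0 then c else d).

Definition unitary2 (Cm : 'M[F]_2) : Prop :=
  Cm *m (map_mx Num.conj Cm)^T = 1%:M.

Definition ketL : 'cV[F]_2 := \col_(i < 2) if i == 0 then 1 else 0.
Definition ketR : 'cV[F]_2 := \col_(i < 2) if i == 0 then 0 else 1.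

Definition braL (v : 'cV[F]_2) : F := v 0 0.
Definition braR (v : 'cV[F]_2) : F := v 1 0.

Definition Pmx (a b : F) : 'M[F]_2 := mx22 a b 0 0.
Definition Qmx (c d : F) : 'M[F]_2 := mx22 0 0 c d.

(* extension by zero of phi : Gamma_M -> C^2 to all x : nat; the value at
   x = -1 is handled separately in E_M (boundary condition phi(-1) = 0). *)
Definition ext (M : nat) (phi : 'I_M -> 'cV[F]_2) (x : nat) : 'cV[F]_2 :=
  match insub x with Some i => phi i | None => 0 end.

Definition E_M (M : nat) (a b c d : F) (phi : 'I_M -> 'cV[F]_2)
  (x : 'I_M) : 'cV[F]_2 :=
  Pmx a b *m ext phi x.+1
  + Qmx c d *m (if (x == 0 :> nat) then 0 else ext phi x.-1).

Definition delta0R (M : nat) (x : 'I_M) : 'cV[F]_2 :=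
  if (x == 0 :> nat) then ketR else 0.

(* (U_{n-1}(t), U_n(t)) for Chebyshev polynomials of the second kind,
   U_{-1} = 0, U_0 = 1, U_{m+1} = 2 t U_m - U_{m-1}. *)
Fixpoint chebUpair (t : F) (n : nat) : F * F :=
  match n with
  | 0 => (0, 1)
  | n'.+1 => let p := chebUpair t n' in (p.2, 2 * t * p.2 - p.1)
  end.

Definition chebUprev (t : F) (m : nat) : F := (chebUpair t m).1.

End Defs.
Arguments delta0R {F M} x.
Arguments ketL {F}.
Arguments ketR {F}.

(* Write s for the chosen square root of Delta = det C, w for the spectral
   parameter on the unit circle, and L x, R x for the two components of the
   resolvent solution phi at site x.  The proof has four ingredients.
   1. Unitarity of C gives |a|^2 + |b|^2 = 1, |Delta| = 1, and expresses d, c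
      through a, b and Delta: d = Delta |a|^2 / a, c = - Delta |b|^2 / b.
   2. Reading (s w - E_M) phi = delta_0 |R> componentwise gives a forward
      recurrence for L, a backward recurrence for R, the source equation
      s w R 0 = 1 and the right boundary condition L (M-1) = 0.
   3. Running the recurrences from the right end, the values at site M-1-n
      are R (M-1) times a unimodular power times an explicit combination of
      the Chebyshev pair (U_{n-1}, U_n)(t), t = (w + w^-1) / (2|a|).
   4. t is real, and the Cassini-type identity U_n^2 - 2t U_{n-1} U_n +
      U_{n-1}^2 = 1 turns the modulus of that combination into
      |a|^2 + |b|^2 U_{M-1}^2; the source equation then fixes |R (M-1)|, and
      both rates follow by taking moduli. *)
From HB Require Import structures.
From mathcomp Require Import all_boot all_order all_algebra.
From mathcomp Require Import complex ring zify.
Set Implicit Arguments. Unset Strict Implicit. Unset Printing Implicit Defensive.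
Import Order.TTheory GRing.Theory Num.Theory.
Local Open Scope ring_scope.

(* [field], followed by the nonzero side conditions, which are conjunctions
   of hypotheses available in the context. *)
Ltac field_nz := field; repeat (apply/andP; split); done.

Section UnitaryCoin.
Variable F : numClosedFieldType.

Lemma unitary2_rows (a b c d : F) : unitary2 (mx22 a b c d) ->
  [/\ a * a^* + b * b^* = 1, a * c^* + b * d^* = 0 & c * c^* + d * d^* = 1].
Proof.
rewrite /unitary2 => hU.
have e00 := congr1 (fun A : 'M[F]_2 => A 0 0) hU.
have e01 := congr1 (fun A : 'M[F]_2 => A 0 1) hU.
have e11 := congr1 (fun A : 'M[F]_2 => A 1 1) hU.
move: e00 e01 e11; rewrite /= !mxE !big_ord_recl big_ord0 !mxE /=.
by rewrite !big_ord0 !addr0.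
Qed.

Lemma det_mx22 (a b c d : F) : \det (mx22 a b c d) = a * d - b * c.
Proof.
rewrite (expand_det_row _ 0) !big_ord_recl big_ord0 /cofactor !det_mx11.
by rewrite !mxE /bump /= expr0 expr1; ring.
Qed.

Lemma unitary2_second_row (a b c d : F) : unitary2 (mx22 a b c d) ->
  let D := a * d - b * c in
  [/\ d = D * a^*, c = - D * b^* & `|D| = 1].
Proof.
move=> /unitary2_rows[h00 h01 h11] D.
have h01c : a^* * c + b^* * d = 0.
  have := congr1 Num.conj h01.
  by rewrite rmorph0 rmorphD !rmorphM /= !conjCK => <-; ring.
have hd : d = D * a^*.
  apply/eqP; rewrite -subr_eq0; apply/eqP.
  transitivity (- (d * (a * a^* + b * b^* - 1) - b * (a^* * c + b^* * d))).
    by rewrite /D; ring.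
  by rewrite h00 h01c subrr; ring.
have hc : c = - D * b^*.
  apply/eqP; rewrite -subr_eq0; apply/eqP.
  transitivity (c * (1 - a * a^* - b * b^*) + a * (a^* * c + b^* * d)).
    by rewrite /D; ring.
  by rewrite -h00 h01c; ring.
have hDD : D * D^* = 1.
  have : c * c^* + d * d^* = D * D^* * (a * a^* + b * b^*).
    by rewrite {1 2}hc {1 2}hd !rmorphM /= rmorphN /= !conjCK; ring.
  by rewrite h00 mulr1 h11.
split=> //.
by apply/eqP; rewrite -sqrp_eq1 ?normr_ge0 // normCK hDD.
Qed.

Lemma unitary2_coeffs (a b c d : F) : a != 0 -> b != 0 ->
  unitary2 (mx22 a b c d) ->
  let D := a * d - b * c in
  [/\ d = D * (`|a| ^+ 2 / a), c = - D * ((1 - `|a| ^+ 2) / b),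
      `|b| ^+ 2 = 1 - `|a| ^+ 2 & `|D| = 1].
Proof.
move=> a0 b0 hU D; have [h00 _ _] := unitary2_rows hU.
have [hd hc nD] := unitary2_second_row hU.
have haa : a * a^* = `|a| ^+ 2 by rewrite normCK.
have ac : a^* = `|a| ^+ 2 / a by rewrite -haa; field_nz.
have bc : b^* = (1 - `|a| ^+ 2) / b by rewrite -haa -h00; field_nz.
split=> //; first by rewrite hd ac.
  by rewrite hc bc.
by rewrite normCK -haa -h00 addrC addKr.
Qed.

End UnitaryCoin.

Section ResolventEquation.
Variables (F : numClosedFieldType) (M : nat) (a b c d k : F).
Variable phi : 'I_M -> 'cV[F]_2.
Hypothesis resolvent :
  forall x : 'I_M, k *: phi x - E_M a b c d phi x = delta0R x.

(* Index bookkeeping: expanding sums over 'I_2 produces these terms. *)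
Let ord0_two : ord0 = 0 :> 'I_2. Proof. exact: val_inj. Qed.
Let lift_ord0_two : lift ord0 (ord0 : 'I_1) = 1 :> 'I_2. Proof. exact: val_inj. Qed.

Lemma ext_ord (x : 'I_M) : ext phi x = phi x.
Proof. by rewrite /ext valK. Qed.

Lemma ext_out (x : nat) : (M <= x)%N -> ext phi x = 0.
Proof. by move=> h; rewrite /ext insubF // ltnNge h. Qed.

Lemma resolvent_compL (x : 'I_M) :
  (k *: phi x - E_M a b c d phi x) 0 0 =
  k * braL (ext phi x) - (a * braL (ext phi x.+1) + b * braR (ext phi x.+1)).
Proof.
rewrite /E_M /braL /braR ext_ord !mxE !big_ord_recl big_ord0 !mxE /=.
by case: (x == 0 :> nat);
  rewrite ?mxE ?big_ord_recl ?big_ord0 ?mxE /= ?ord0_two ?lift_ord0_two; ring.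
Qed.

Lemma resolvent_compR (x : 'I_M) :
  (k *: phi x - E_M a b c d phi x) 1 0 =
  k * braR (ext phi x) - (if (x == 0 :> nat) then 0 else
     c * braL (ext phi x.-1) + d * braR (ext phi x.-1)).
Proof.
rewrite /E_M /braL /braR ext_ord !mxE !big_ord_recl big_ord0 !mxE /=.
by case: (x == 0 :> nat);
  rewrite ?mxE ?big_ord_recl ?big_ord0 ?mxE /= ?ord0_two ?lift_ord0_two; ring.
Qed.

Lemma resolvent_forward (x : nat) : (x < M)%N ->
  k * braL (ext phi x) = a * braL (ext phi x.+1) + b * braR (ext phi x.+1).
Proof.
move=> hx; apply/eqP; rewrite -subr_eq0; apply/eqP.
have := congr1 (fun A : 'cV[F]_2 => A 0 0) (resolvent (Ordinal hx)).
by rewrite /= resolvent_compL /delta0R; case: ifP; rewrite mxE.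
Qed.

Lemma resolvent_backward (x : nat) : (0 < x < M)%N ->
  k * braR (ext phi x) = c * braL (ext phi x.-1) + d * braR (ext phi x.-1).
Proof.
case/andP=> x0 hx; apply/eqP; rewrite -subr_eq0; apply/eqP.
have := congr1 (fun A : 'cV[F]_2 => A 1 0) (resolvent (Ordinal hx)).
by rewrite /= resolvent_compR /delta0R /= (negbTE (lt0n_neq0 x0)) mxE.
Qed.

Lemma resolvent_source : (0 < M)%N -> k * braR (ext phi 0) = 1.
Proof.
move=> hM; apply/eqP; rewrite -[k * _]subr0; apply/eqP.
have := congr1 (fun A : 'cV[F]_2 => A 1 0) (resolvent (Ordinal hM)).
by rewrite /= resolvent_compR /delta0R /= mxE.
Qed.

(* Dirichlet condition phi(M) = 0 seen through the last forward equation. *)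
Lemma resolvent_right_end : (0 < M)%N -> k != 0 -> braL (ext phi M.-1) = 0.
Proof.
move=> hM k0; have := resolvent_forward (x := M.-1).
rewrite ltn_predL hM prednK // (ext_out (leqnn M)) /braL /braR !mxE !mulr0 addr0.
by move=> /(_ isT) /eqP; rewrite mulf_eq0 (negbTE k0) => /eqP.
Qed.

End ResolventEquation.

Section Chebyshev.
Variable F : numClosedFieldType.

Lemma cheb_cassini (t : F) (n : nat) :
  (chebUpair t n).2 ^+ 2 - 2 * t * (chebUpair t n).1 * (chebUpair t n).2
  + (chebUpair t n).1 ^+ 2 = 1.
Proof. by elim: n => [|n IH] /=; [ring | rewrite -[RHS]IH; ring]. Qed.

Lemma cheb_real (t : F) (n : nat) : t^* = t ->
  ((chebUpair t n).1)^* = (chebUpair t n).1 /\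
  ((chebUpair t n).2)^* = (chebUpair t n).2.
Proof.
move=> ht; elim: n => [|n [IH1 IH2]] /=; first by rewrite rmorph0 rmorph1.
by split; rewrite // rmorphB !rmorphM /= IH1 IH2 ht rmorph_nat.
Qed.

Lemma cheb_arg_real (w al : F) : `|w| = 1 -> 0 <= al ->
  ((w + w^-1) / (2 * al))^* = (w + w^-1) / (2 * al).
Proof.
move=> hw al_ge0.
have wc : w^* = w^-1 by rewrite invC_norm hw expr1n invr1 mul1r.
rewrite !(rmorphM, rmorphD, fmorphV) /= rmorph1 wc invrK geC0_conj //.
by rewrite addrC.
Qed.

Lemma cheb_twisted_norm (w al : F) (n : nat) : `|w| = 1 -> 0 < al ->
  let t := (w + w^-1) / (2 * al) in
  `|(chebUpair t n).2 - al * w^-1 * (chebUpair t n).1| ^+ 2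
    = al ^+ 2 + (1 - al ^+ 2) * (chebUpair t n).2 ^+ 2.
Proof.
move=> hw al_gt0 t.
have w0 : w != 0 by rewrite -normr_eq0 hw oner_eq0.
have al0 : al != 0 by rewrite gt_eqF.
have two0 : (2 : F) != 0 by rewrite pnatr_eq0.
have wc : w^* = w^-1 by rewrite invC_norm hw expr1n invr1 mul1r.
have alc : al^* = al by rewrite geC0_conj // ltW.
have [pc qc] := cheb_real n (cheb_arg_real hw (ltW al_gt0)).
have cass := cheb_cassini t n.
set p := (chebUpair t n).1 in pc qc cass *.
set q := (chebUpair t n).2 in pc qc cass *.
rewrite normCK !(rmorphM, rmorphB, fmorphV) /= pc qc alc wc invrK.
apply/eqP; rewrite -subr_eq0; apply/eqP.
transitivity (al ^+ 2 * (q ^+ 2 - 2 * t * p * q + p ^+ 2 - 1)).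
  by rewrite /t; field_nz.
by rewrite cass subrr mulr0.
Qed.

End Chebyshev.

Lemma backward_solution (F : numClosedFieldType) (L R : nat -> F) (m : nat)
    (a b c d s w al : F) :
  a != 0 -> b != 0 -> al != 0 -> s != 0 -> w != 0 ->
  c = - s ^+ 2 * ((1 - al ^+ 2) / b) -> d = s ^+ 2 * (al ^+ 2 / a) ->
  (forall x, (x < m)%N -> s * w * L x = a * L x.+1 + b * R x.+1) ->
  (forall x, (0 < x <= m)%N -> s * w * R x = c * L x.-1 + d * R x.-1) ->
  L m = 0 ->
  forall n, (n <= m)%N ->
  let t := (w + w^-1) / (2 * al) in
  L (m - n)%N = R m * (a / (al * s)) ^+ n * (chebUpair t n).1
                  * (b * al * w^-1 / a) /\
  R (m - n)%N = R m * (a / (al * s)) ^+ n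
                  * ((chebUpair t n).2 - al * w^-1 * (chebUpair t n).1).
Proof.
move=> a0 b0 al0 s0 w0 hc hd fwd bwd Lm.
have two0 : (2 : F) != 0 by rewrite pnatr_eq0.
have sw0 : s * w != 0 by rewrite mulf_neq0.
have d0 : d != 0.
  by rewrite hd mulf_neq0 ?expf_neq0 // mulf_neq0 ?expf_neq0 ?invr_eq0.
elim=> [|n IH] hn t; rewrite {}/t; first by rewrite subn0 Lm /=; split; ring.
have [IHL IHR] := IH (ltnW hn).
set x := (m - n.+1)%N.
have hx1 : x.+1 = (m - n)%N by rewrite /x subnSK.
have hLx : L x = (a * L x.+1 + b * R x.+1) / (s * w).
  by rewrite -fwd /x ?subnSK //; [field_nz | lia].
have hRx : R x = (s * w * R x.+1 - c * L x) / d.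
  by rewrite bwd /=; [field_nz | rewrite /x; lia].
rewrite hx1 IHL IHR in hLx hRx; rewrite hLx in hRx.
rewrite hRx hLx /= !exprS hc hd.
set p := (chebUpair _ n).1; set q := (chebUpair _ n).2; set K := _ ^+ n.
by split; field_nz.
Qed.

Lemma resolvent_at_source (F : numClosedFieldType) (M : nat) (a b c d s w : F)
    (phi : 'I_M -> 'cV[F]_2) :
  (0 < M)%N -> a != 0 -> b != 0 -> s != 0 -> w != 0 ->
  c = - s ^+ 2 * ((1 - `|a| ^+ 2) / b) -> d = s ^+ 2 * (`|a| ^+ 2 / a) ->
  (forall x : 'I_M, (s * w) *: phi x - E_M a b c d phi x = delta0R x) ->
  let t := (w + w^-1) / (2 * `|a|) in
  let g := braR (ext phi M.-1) * (a / (`|a| * s)) ^+ M.-1 in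
  braL (ext phi 0) = g * (chebUpair t M.-1).1 * (b * `|a| * w^-1 / a) /\
  braR (ext phi 0) =
    g * ((chebUpair t M.-1).2 - `|a| * w^-1 * (chebUpair t M.-1).1).
Proof.
move=> hM a0 b0 s0 w0 hc hd Hres t g.
have al0 : `|a| != 0 by rewrite normr_eq0.
pose L n := braL (ext phi n); pose Rf n := braR (ext phi n).
have fwd x : (x < M.-1)%N -> s * w * L x = a * L x.+1 + b * Rf x.+1.
  by move=> hx; apply: (resolvent_forward Hres); lia.
have bwd x : (0 < x <= M.-1)%N -> s * w * Rf x = c * L x.-1 + d * Rf x.-1.
  by move=> hx; apply: (resolvent_backward Hres); lia.
have := backward_solution a0 b0 al0 s0 w0 hc hd fwd bwd
  (resolvent_right_end Hres hM (mulf_neq0 s0 w0)) (leqnn M.-1).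
by rewrite subnn.
Qed.

Lemma rates_closed_form (F : numClosedFieldType) (al b d r g K q : F) :
  `|d| = al -> q^* = q -> `|g| = 1 -> `|r| * `|K| = 1 ->
  `|K| ^+ 2 = al ^+ 2 + `|b| ^+ 2 * q ^+ 2 ->
  let den := al ^+ 2 + `|b| ^+ 2 * q ^+ 2 in
  [/\ `|d * r| ^+ 2 = al ^+ 2 / den,
      `|r * g * b * q| ^+ 2 = `|b| ^+ 2 * q ^+ 2 / den &
      `|d * r| ^+ 2 + `|r * g * b * q| ^+ 2 = 1].
Proof.
move=> nd qc ng hr nK den.
have hr2 : `|r| ^+ 2 * den = 1 by rewrite /den -nK -exprMn hr expr1n.
have den0 : den != 0.
  by apply: contra_eq_neq hr2 => ->; rewrite mulr0 eq_sym oner_neq0.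
have nr : `|r| ^+ 2 = 1 / den by rewrite -hr2; field_nz.
have nq : `|q| ^+ 2 = q ^+ 2 by rewrite normCK qc expr2.
have hT : `|d * r| ^+ 2 = al ^+ 2 / den.
  by rewrite normrM exprMn nd nr; field_nz.
have hR : `|r * g * b * q| ^+ 2 = `|b| ^+ 2 * q ^+ 2 / den.
  by rewrite !normrM ng mulr1 !exprMn nq nr; field_nz.
by split=> //; rewrite hT hR -mulrDl -/den divff.
Qed.

Theorem mainTheorem4 (R : rcfType) (M : nat) (a b c d sqrtDelta omega : R[i])
  (phi : 'I_M -> 'cV[R[i]]_2) :
  (0 < M)%N ->
  unitary2 (mx22 a b c d) ->
  a * b * c * d != 0 ->
  sqrtDelta ^+ 2 = \det (mx22 a b c d) ->
  `|omega| = 1 ->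
  (forall x : 'I_M,
     (sqrtDelta * omega) *: phi x - E_M a b c d phi x = delta0R x) ->
  let z' := chebUprev ((omega + omega^-1) / (2 * `|a|)) M in
  let T := `|d * braR (ext phi M.-1)| ^+ 2 in
  let Rr := `|a * braL (ext phi 0) + b * braR (ext phi 0)| ^+ 2 in
  T = `|a| ^+ 2 / (`|a| ^+ 2 + `|b| ^+ 2 * z' ^+ 2) /\
  Rr = `|b| ^+ 2 * z' ^+ 2 / (`|a| ^+ 2 + `|b| ^+ 2 * z' ^+ 2) /\
  T + Rr = 1.
Proof.
set s := sqrtDelta; set w := omega => hM hU habcd hs hw Hres z' T Rr.
move: habcd; rewrite !mulf_eq0 !negb_or => /andP[/andP[/andP[a0 b0] _] _].
have [hd hc nb nD] := unitary2_coeffs a0 b0 hU.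
rewrite -(det_mx22 a b c d) -hs in hd hc nD.
set al := `|a| in hd hc nb *.
have al_gt0 : 0 < al by rewrite normr_gt0.
have ns : `|s| = 1 by apply/eqP; rewrite -sqrp_eq1 // -normrX nD.
have s0 : s != 0 by rewrite -normr_eq0 ns oner_neq0.
have w0 : w != 0 by rewrite -normr_eq0 hw oner_neq0.
have [HL HR] := resolvent_at_source hM a0 b0 s0 w0 hc hd Hres.
set t := (w + w^-1) / (2 * al) in HL HR.
set p := (chebUpair t M.-1).1 in HL HR; set q := (chebUpair t M.-1).2 in HL HR.
have hz : z' = q by rewrite /z' /chebUprev /q -{1}(prednK hM).
have qc : q^* = q := (cheb_real _ (cheb_arg_real hw (ltW al_gt0))).2.
have nK := cheb_twisted_norm M.-1 hw al_gt0; rewrite -/t -/p -/q -nb in nK.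
set g := (a / (al * s)) ^+ M.-1 in HL HR.
have ng : `|g| = 1.
  by rewrite normrX normrM normfV normrM normr_id ns mulr1 mulfV ?expr1n ?lt0r_neq0.
have hr : `|braR (ext phi M.-1)| * `|q - al * w^-1 * p| = 1.
  have := congr1 Num.norm (resolvent_source Hres hM).
  by rewrite HR !normrM ns hw ng normr1 !mul1r mulr1.
have nd : `|d| = al.
  rewrite hd normrM normrX ns expr1n mul1r normrM normfV normrX normr_id.
  by field; rewrite lt0r_neq0.
have [hT hR hsum] := rates_closed_form nd qc ng hr nK.
have -> : Rr = `|braR (ext phi M.-1) * g * b * q| ^+ 2.
  rewrite /Rr HL HR; congr (`|_| ^+ 2).
  by field_nz.
by rewrite hz; split; [exact: hT | split; [exact: hR | exact: hsum]].
Qed.
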